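(* The only novel partition of length $5$ is $(2,1,1,1,1)$.
   Context: An integer partition is $\lambda=(\lambda_1,\dots,\lambda_k)$ with integers $\lambda_1\ge\dots\ge\lambda_k\ge 1$; $k$ is its length. For $v\in\mathbb{Z}^k$ let $v^{\perp B}=\{x\in\{-1,1\}^k: v\cdot x=0\}$; $\lambda^{\perp B}$ is this set for $(\lambda_1,\dots,\lambda_k)$. $V_\lambda\subset\mathbb{Z}^k$ is the set of vectors obtained from $(\lambda_1,\dots,\lambda_k)$ by permuting coordinates and changing signs of some coordinates, with first coordinate positive. For $I\subset\{1,\dots,m\}$, $\mathrm{Proj}_I:\{-1,1\}^m\to\{-1,1\}^{|I|}$ keeps the coordinates indexed by $I$. Reduction: for partitions $\mu$ of length $m$ and $\lambda$ of length $k\le m$, $\mu\Rightarrow\lambda$ iff there exist $I\subset\{1,\dots,m\}$, $|I|=k$, and $v\in V_\lambda$ with $\mathrm{Proj}_I(\mu^{\perp B})\subset v^{\perp B}$. $\mu$ strictly reduces to $\lambda$ iff $\mu\Rightarrow\lambda$ and not $\lambda\Rightarrow\mu$. Partitions $\lambda,\mu$ of the same length are equivalent iff there is $w\in V_\mu$ with $\lambda^{\perp B}=w^{\perp B}$. A partition $\lambda$ is novel iff $\lambda^{\perp B}\neq\emptyset$, $\lambda$ strictly reduces to no partition, and $\lambda$ is lexicographically smallest among partitions equivalent to it. *)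

From HB Require Import structures.
From mathcomp Require Import all_boot all_order all_algebra.
Set Implicit Arguments. Unset Strict Implicit. Unset Printing Implicit Defensive.
Import GRing.Theory Num.Theory.

Definition is_partition (l : seq nat) : bool :=
  [&& 0 < size l, sorted geq l & all (fun a => 0 < a) l].

Definition is_sign (z : int) : bool := (z == 1%R) || (z == (-1)%R).

Definition dotZ (v x : seq int) : int := (\sum_(p <- zip v x) p.1 * p.2)%R.

Definition perpB (v x : seq int) : bool :=
  [&& size x == size v, all is_sign x & dotZ v x == 0%R].

Definition vecZ (l : seq nat) : seq int := map Posz l.

(* V_lambda : signed permutations of lambda with positive first coordinate *)
Definition inV (l : seq nat) (v : seq int) : bool :=
  perm_eq (map absz v) l && (0 < head 0%R v)%R.

(* Proj_I is encoded by a mask b : bitseq of size m with count b = |I|;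
   mask b x keeps the coordinates of x selected by b, in order. *)
Definition reduces (mu la : seq nat) : Prop :=
  size la <= size mu /\
  exists (b : bitseq) (v : seq int),
    [/\ size b = size mu, count id b = size la, inV la v &
        forall x, perpB (vecZ mu) x -> perpB v (mask b x)].

Definition strictly_reduces (mu la : seq nat) : Prop :=
  reduces mu la /\ ~ reduces la mu.

Definition equivalent (la mu : seq nat) : Prop :=
  size la = size mu /\
  exists w, inV mu w /\ forall x, perpB (vecZ la) x = perpB w x.

Fixpoint lex_le (s t : seq nat) : bool :=
  match s, t with
  | [::], _ => true
  | _ :: _, [::] => false
  | a :: s', b :: t' => (a < b) || ((a == b) && lex_le s' t')
  end.

Definition novel (la : seq nat) : Prop :=
  [/\ exists x, perpB (vecZ la) x,
      (forall mu, is_partition mu -> ~ strictly_reduces la mu) &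
      (forall mu, is_partition mu -> equivalent mu la -> lex_le la mu)].

From mathcomp Require Import all_boot all_order all_algebra.
From mathcomp Require Import zify.
From Stdlib Require Import Classical.
Import GRing.Theory Num.Theory.

(* Call x in {-1,1}^k a balancing of v when v . x = 0, so that v^{perp B} is
   the set of balancings of v.  The proof rests on a few general facts:
   - balanceability of a vector depends only on the multiset of absolute
     values of its entries, so every w in V_la is balanceable when la is;
   - scaling a partition by n > 0 does not change its balancings, hence
     gives an equivalent partition and a reduction in both directions;
   - a balanceable vector has an even sum of entries (parity);
   - if mu is longer than la, mu => la can never be reversed, so a
     non-reduction mu -/-> la is witnessed by a balancing of mu.
   Necessity: a novel la = (a,b,c,d,e) does not reduce to (1,1), so it has
   balancings with x1 = x2, with x1 = x5 and with x4 <> x5; each of them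
   forces a linear relation among a..e, and together with the ordering these
   relations give la = e (2,1,1,1,1); lexicographic minimality forces e = 1.
   Sufficiency: a reduction (2,1,1,1,1) => mu must keep all five coordinates
   and use a multiple of (2,1,1,1,1), so mu is such a multiple and reduces
   back; an equivalent partition (1,1,1,1,1) is excluded by parity. *)

(* The dot product as a structural recursion, convenient for computing. *)
Fixpoint dotF (v x : seq int) : int :=
  if (v, x) is (p :: v', q :: x') then (p * q + dotF v' x')%R else 0%R.

Lemma dotZ_F v x : dotZ v x = dotF v x.
Proof.
by elim: v x => [|p v IH] [|q x]; rewrite /dotZ /= ?big_nil // big_cons -IH.
Qed.

Lemma perpB_F v x :
  perpB v x = [&& size x == size v, all is_sign x & dotF v x == 0%R].
Proof. by rewrite /perpB dotZ_F. Qed.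

Lemma is_signP s : is_sign s -> s = 1%R \/ s = (-1)%R.
Proof. by case/orP => /eqP ->; [left | right]. Qed.

(* Flips x_i wherever w_i < 0, so that w_i * y_i = |w_i| * x_i. *)
Definition sign_align (w x : seq int) : seq int :=
  [seq (if p.1 < 0 then - p.2 else p.2)%R | p <- zip w x].

Lemma perpB_sign_align w x :
  perpB (vecZ (map absz w)) x -> perpB w (sign_align w x).
Proof.
rewrite !perpB_F /vecZ !size_map => /and3P[/eqP Hsz Hsg /eqP Hdot].
apply/and3P; split.
- by rewrite size_zip Hsz minnn.
- elim: w x Hsz Hsg {Hdot} => [|z w IH] [|s x] //= [/IH Hal] /andP[Hs /Hal ->].
  by rewrite andbT; case: ifP => //; case/orP: Hs => /eqP ->.
- apply/eqP; rewrite -Hdot; elim: w x Hsz {Hsg Hdot} => [|z w IH] [|s x] //= [/IH ->].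
  congr (_ + _)%R; case: ltrP => [z_lt0 | z_ge0].
  + by rewrite abszE ltr0_norm // mulrN mulNr.
  + by rewrite abszE ger0_norm.
Qed.

(* Balanceability is invariant under permuting the entries: transport x
   along the permutation, which reorders the terms of the dot product. *)
Lemma perm_balanceable p q :
  perm_eq p q -> (exists x, perpB (vecZ q) x) -> exists x, perpB (vecZ p) x.
Proof.
rewrite /vecZ => /(perm_iotaP 0)[Is HIs ->] [x]; rewrite !perpB_F -!dotZ_F.
move=> /and3P[/eqP Hsz Hsg /eqP Hdot]; exists (map (nth 1%R x) Is).
apply/and3P; split; first by rewrite !size_map.
- apply/allP => _ /mapP[i _ ->]; case: (ltnP i (size x)) => [lt_ix | le_xi].
    exact/(allP Hsg)/mem_nth.
  by rewrite nth_default.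
- apply/eqP; rewrite -{}Hdot /dotZ -map_comp zip_map.
  have Ezip : [seq ((Posz \o nth 0%N q) i, nth 1%R x i) | i <- Is]
            = map (nth (0%R, 1%R) (zip (map Posz q) x)) Is.
    apply/eq_in_map => i; rewrite (perm_mem HIs) mem_iota => /andP[_ lt_iq].
    by rewrite nth_zip ?Hsz // (nth_map 0%N).
  rewrite Ezip; apply: perm_big; apply/(perm_iotaP (0%R, 1%R)).
  by exists Is; rewrite // size1_zip ?Hsz // size_map.
Qed.

Lemma inV_balanceable la w :
  inV la w -> (exists x, perpB (vecZ la) x) -> exists x, perpB w x.
Proof.
case/andP => Hperm _ /(perm_balanceable _ _ Hperm)[x Hx].
by exists (sign_align w x); apply: perpB_sign_align.
Qed.

Definition scale (n : nat) (l : seq nat) : seq nat := map (muln n) l.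

Lemma perpB_scale n l x :
  0 < n -> perpB (vecZ (scale n l)) x = perpB (vecZ l) x.
Proof.
move=> n_gt0; rewrite !perpB_F !size_map.
have -> : dotF (vecZ (scale n l)) x = (Posz n * dotF (vecZ l) x)%R.
  elim: l x => [|a l IH] [|s x] /=; rewrite ?mulr0 // IH PoszM.
  by rewrite mulrDr mulrA.
by rewrite mulf_eq0 (_ : (Posz n == 0%R) = false) //; lia.
Qed.

Lemma is_partition_scale n l :
  0 < n -> is_partition l -> is_partition (scale n l).
Proof.
move=> n_gt0 /and3P[Hsz Hsort Hpos]; apply/and3P; split.
- by rewrite size_map.
- by apply: homo_sorted Hsort => p q /= le_qp; apply: leq_mul.
- by rewrite all_map; apply: sub_all Hpos => p /= p_gt0; rewrite muln_gt0 n_gt0.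
Qed.

Lemma inV_vecZ l : is_partition l -> inV l (vecZ l).
Proof.
case/and3P; case: l => [|a l] //= _ _ /andP[a_gt0 _].
by rewrite /inV /= -map_comp map_id perm_refl.
Qed.

(* If mu and the partition la have the same length and the same balancings,
   then mu => la, keeping all coordinates and using v = la itself. *)
Lemma reduces_of_perp_eq mu la :
  size la = size mu -> is_partition la ->
  (forall x, perpB (vecZ mu) x = perpB (vecZ la) x) -> reduces mu la.
Proof.
move=> Hsz Hla Hperp; split; first by rewrite Hsz.
exists (nseq (size mu) true), (vecZ la); split.
- by rewrite size_nseq.
- by rewrite count_nseq mul1n.
- exact: inV_vecZ.
- move=> x Hx; rewrite mask_true -?Hperp //.
  by move: Hx; rewrite perpB_F /vecZ size_map => /andP[/eqP -> _].
Qed.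

(* Likewise la and mu are then equivalent, witnessed by w = mu itself. *)
Lemma equivalent_of_perp_eq la mu :
  size la = size mu -> is_partition mu ->
  (forall x, perpB (vecZ la) x = perpB (vecZ mu) x) -> equivalent la mu.
Proof.
move=> Hsz Hmu Hperp; split=> //.
by exists (vecZ mu); split; first exact: inV_vecZ.
Qed.

(* If mu is longer than la, then mu => la cannot be reversed; hence if mu
   does not strictly reduce to la, every candidate (I, v) for mu => la is
   refuted by a balancing of mu whose projection is not balanced by v. *)
Lemma witness_of_not_reduces mu la b v :
  size la < size mu -> ~ strictly_reduces mu la ->
  size b = size mu -> count id b = size la -> inV la v ->
  exists2 x, perpB (vecZ mu) x & ~~ perpB v (mask b x).
Proof.
move=> Hlt Hnot Hb Hc Hv; apply: NNPP => Hno; apply: Hnot; split.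
  split; first exact: ltnW.
  exists b, v; split=> // x Hx.
  by apply/negPn/negP => Hsep; apply: Hno; exists x.
by case; rewrite leqNgt Hlt.
Qed.

(* Parity: l . x = sum l - 2k for signs x, so a balanceable l has even sum. *)
Lemma balanced_sum_even l x : perpB (vecZ l) x -> 2 %| sumn l.
Proof.
rewrite perpB_F /vecZ size_map => /and3P[/eqP Hsz Hsg /eqP Hdot].
suff [k Ek] : exists k : int, dotF (map Posz l) x = (Posz (sumn l) - 2 * k)%R.
  by move: Ek; rewrite Hdot; lia.
elim: l x Hsz Hsg {Hdot} => [|a l IH] [|s x] //=; first by exists 0%R.
move=> [/IH IHx] /andP[/is_signP Hs /IHx[k ->]].
by case: Hs => ->; [exists k | exists (k + Posz a)%R]; lia.
Qed.

Lemma partition5 la : is_partition la -> size la = 5 ->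
  exists a b c d e,
    la = [:: a; b; c; d; e] /\ [/\ b <= a, c <= b, d <= c, e <= d & 0 < e].
Proof.
case/and3P => _; case: la => [|a [|b [|c [|d [|e [|? ?]]]]]] //= Hsort Hpos _.
exists a, b, c, d, e; split=> //.
by case/and5P: Hsort => ? ? ? ? _; case/and5P: Hpos => _ _ _ _ /andP[].
Qed.

Lemma perpB_vecZ5 a b c d e x : perpB (vecZ [:: a; b; c; d; e]) x ->
  exists s1 s2 s3 s4 s5,
    [/\ x = [:: s1; s2; s3; s4; s5], all is_sign [:: s1; s2; s3; s4; s5] &
        (Posz a * s1 + Posz b * s2 + Posz c * s3 + Posz d * s4 + Posz e * s5 = 0)%R].
Proof.
rewrite perpB_F => /and3P[/eqP].
case: x => [|s1 [|s2 [|s3 [|s4 [|s5 [|? ?]]]]]] //= _ Hsg /eqP E.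
by exists s1, s2, s3, s4, s5; split; rewrite // -E !addrA addr0.
Qed.

Ltac case_signs H :=
  repeat (move: H => /andP[/is_signP[] ? H]; subst).

Section BalancingsOfLength5.
Variables a b c d e : nat.
Hypothesis decreasing : [/\ b <= a, c <= b, d <= c, e <= d & 0 < e].

(* A balancing with x1 = x2 (not balanced by (1,1) on coordinates 1,2). *)
Lemma tied_first_second x : perpB (vecZ [:: a; b; c; d; e]) x ->
  ~~ perpB [:: 1; 1]%R (mask [:: true; true; false; false; false] x) ->
  a + b = c + d + e.
Proof.
move=> /perpB_vecZ5[s1 [s2 [s3 [s4 [s5 [-> Hsg E]]]]]] Hsep; case: decreasing => *.
case_signs Hsg; rewrite perpB_F in Hsep; vm_compute in Hsep; try discriminate; lia.
Qed.

(* A balancing with x1 = x5. *)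
Lemma tied_first_fifth x : perpB (vecZ [:: a; b; c; d; e]) x ->
  ~~ perpB [:: 1; 1]%R (mask [:: true; false; false; false; true] x) ->
  a + e = b + c + d \/ a + d + e = b + c.
Proof.
move=> /perpB_vecZ5[s1 [s2 [s3 [s4 [s5 [-> Hsg E]]]]]] Hsep; case: decreasing => *.
case_signs Hsg; rewrite perpB_F in Hsep; vm_compute in Hsep; try discriminate; lia.
Qed.

(* A balancing with x4 <> x5 (not balanced by (1,-1) on coordinates 4,5). *)
Lemma split_fourth_fifth x : perpB (vecZ [:: a; b; c; d; e]) x ->
  ~~ perpB [:: 1; -1]%R (mask [:: false; false; false; true; true] x) ->
  b + c + e = a + d \/ b + c + d = a + e \/ b + d = a + c + e.
Proof.
move=> /perpB_vecZ5[s1 [s2 [s3 [s4 [s5 [-> Hsg E]]]]]] Hsep; case: decreasing => *.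
case_signs Hsg; rewrite perpB_F in Hsep; vm_compute in Hsep; try discriminate; lia.
Qed.

Lemma forced_shape :
  a + b = c + d + e ->
  a + e = b + c + d \/ a + d + e = b + c ->
  b + c + e = a + d \/ b + c + d = a + e \/ b + d = a + c + e ->
  [:: a; b; c; d; e] = scale e [:: 2; 1; 1; 1; 1].
Proof.
case: decreasing => *.
have [-> -> -> ->] : [/\ a = e * 2, b = e, c = e & d = e] by split; lia.
by rewrite /scale /= muln1.
Qed.
End BalancingsOfLength5.

Arguments tied_first_second {a b c d e} decreasing {x}.
Arguments tied_first_fifth {a b c d e} decreasing {x}.
Arguments split_fourth_fifth {a b c d e} decreasing {x}.
Arguments forced_shape {a b c d e} decreasing.

Lemma lex_minimal_scale n :
  0 < n ->
  (forall mu, is_partition mu -> equivalent mu (scale n [:: 2; 1; 1; 1; 1]) ->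
     lex_le (scale n [:: 2; 1; 1; 1; 1]) mu) ->
  n = 1.
Proof.
move=> n_gt0 Hmin.
have : lex_le (scale n [:: 2; 1; 1; 1; 1]) [:: 2; 1; 1; 1; 1].
  apply: Hmin => //; apply: equivalent_of_perp_eq => //.
    exact: is_partition_scale.
  by move=> x; rewrite perpB_scale.
by rewrite /= !muln1; lia.
Qed.

Lemma novel_length5_is_21111 la :
  is_partition la -> size la = 5 -> novel la -> la = [:: 2; 1; 1; 1; 1].
Proof.
move=> Hla Hsz [_ Hirr Hmin].
have [a [b [c [d [e [Ela ord]]]]]] := partition5 _ Hla Hsz.
have pair_sep bm v : size bm = 5 -> count id bm = 2 -> inV [:: 1; 1] v ->
    exists2 x, perpB (vecZ la) x & ~~ perpB v (mask bm x).
  move=> Hb Hc Hv.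
  by apply: (witness_of_not_reduces _ _ _ _ _ (Hirr [:: 1; 1] isT)); rewrite ?Hsz.
have [x12 bal12 sep12] := pair_sep [:: true; true; false; false; false] [:: 1; 1]%R
  erefl erefl isT.
have [x15 bal15 sep15] := pair_sep [:: true; false; false; false; true] [:: 1; 1]%R
  erefl erefl isT.
have [x45 bal45 sep45] := pair_sep [:: false; false; false; true; true] [:: 1; -1]%R
  erefl erefl isT.
rewrite Ela in bal12 bal15 bal45 Hmin *.
have Eshape := forced_shape ord
  (tied_first_second ord bal12 sep12) (tied_first_fifth ord bal15 sep15)
  (split_fourth_fifth ord bal45 sep45).
rewrite Eshape in Hmin *.
have e_gt0 : 0 < e by case: ord.
by rewrite (lex_minimal_scale _ e_gt0 Hmin).
Qed.

Lemma balanced_21111 : exists x, perpB (vecZ [:: 2; 1; 1; 1; 1]) x.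
Proof. by exists [:: 1; 1; -1; -1; -1]%R; rewrite perpB_F. Qed.

(* An equivalent partition mu is lexicographically at least (2,1,1,1,1):
   if mu_1 < 2 then mu = (1,1,1,1,1), which has no balancing by parity,
   while the equivalent signed permutation of (2,1,1,1,1) has one. *)
Lemma lex_minimal_21111 mu :
  is_partition mu -> equivalent mu [:: 2; 1; 1; 1; 1] ->
  lex_le [:: 2; 1; 1; 1; 1] mu.
Proof.
move=> Hmu [Hsz [w [Hw Hperp]]].
have [m1 [m2 [m3 [m4 [m5 [Emu ord]]]]]] := partition5 _ Hmu Hsz.
rewrite Emu in Hperp *; case: ord => *.
have [lt_m1_2 | ] := ltnP m1 2; last by rewrite /=; lia.
have [x] := inV_balanceable _ _ Hw balanced_21111.
by rewrite -Hperp => /balanced_sum_even /=; lia.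
Qed.

Ltac dot_equation H :=
  move: H; rewrite perpB_F => /and3P[_ _ /eqP]; rewrite /= => H.

(* Rigidity: testing a reduction (2,1,1,1,1) => mu against the four
   balancings with x1 = 1 and exactly one more +1 shows that all five
   coordinates are kept and v is a positive multiple of (2,1,1,1,1). *)
Lemma rigid_reduction b v :
  size b = 5 -> size v = count id b -> (0 < head 0 v)%R ->
  (forall x, perpB (vecZ [:: 2; 1; 1; 1; 1]) x -> perpB v (mask b x)) ->
  exists2 n, 0 < n & v = vecZ (scale n [:: 2; 1; 1; 1; 1]).
Proof.
move=> Hb Hsv Hhead Hred.
have [H2 H3 H4 H5] : [/\ perpB v (mask b [:: 1; 1; -1; -1; -1]%R),
                         perpB v (mask b [:: 1; -1; 1; -1; -1]%R),
                         perpB v (mask b [:: 1; -1; -1; 1; -1]%R) &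
                         perpB v (mask b [:: 1; -1; -1; -1; 1]%R)].
  by split; apply: Hred; rewrite perpB_F.
clear Hred.
case: b Hb Hsv H2 H3 H4 H5 => [|b1 [|b2 [|b3 [|b4 [|b5 [|? ?]]]]]] // _.
case: b1; case: b2; case: b3; case: b4; case: b5 => Hsv H2 H3 H4 H5;
  case: v Hhead Hsv H2 H3 H4 H5
    => [|v1 [|v2 [|v3 [|v4 [|v5 [|? ?]]]]]] //= Hhead _ H2 H3 H4 H5;
  dot_equation H2; dot_equation H3; dot_equation H4; dot_equation H5;
  try (exfalso; lia).
(* Only the full mask survives, with v = (2n, n, n, n, n). *)
case: v5 H2 H3 H4 H5 => n H2 H3 H4 H5; last by exfalso; lia.
exists n; first by lia.
by rewrite /scale /= muln1 PoszM; repeat f_equal; lia.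
Qed.

Lemma reduces_back_21111 mu :
  is_partition mu -> reduces [:: 2; 1; 1; 1; 1] mu -> reduces mu [:: 2; 1; 1; 1; 1].
Proof.
move=> Hmu [_ [b [v [Hb Hc /andP[Hperm Hhead] Hred]]]].
have Hsv : size v = count id b by rewrite -(size_map absz) (perm_size Hperm) Hc.
have [n n_gt0 Ev] := rigid_reduction _ _ Hb Hsv Hhead Hred.
have Emu : mu = scale n [:: 2; 1; 1; 1; 1].
  apply: (sorted_eq (leT := geq)).
  - by move=> p q r /= le_pq le_qr; apply: leq_trans le_qr le_pq.
  - by move=> p q /andP[le_qp le_pq]; apply: anti_leq; apply/andP.
  - by case/and3P: Hmu.
  - have /and3P[] // := is_partition_scale _ [:: 2; 1; 1; 1; 1] n_gt0 isT.
  - by move: Hperm; rewrite Ev /vecZ -map_comp map_id perm_sym.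
rewrite Emu; apply: reduces_of_perp_eq => // x.
by rewrite perpB_scale.
Qed.

Theorem mainTheorem9 (la : seq nat) :
  is_partition la -> size la = 5 -> (novel la <-> la = [:: 2; 1; 1; 1; 1]).
Proof.
move=> Hla Hsz; split; first exact: novel_length5_is_21111.
move=> ->; split.
- exact: balanced_21111.
- by move=> mu Hmu [Hred []]; apply: reduces_back_21111.
- exact: lex_minimal_21111.
Qed.
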